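(* Let $H_1$ and $H_2$ be vertex-disjoint connected graphs, each with at least two vertices, and let $l\geqslant 2$. Let $G_1$ be the graph obtained from $H_1$, $H_2$ and a path $v_1v_2\ldots v_l$ by identifying $v_1$ with a vertex of $H_1$ and $v_l$ with a vertex of $H_2$ (the internal vertices $v_2,\ldots,v_{l-1}$ being new). Let $$G_2=G_1-\{v_lx: x\in N_{H_2}(v_l)\}+\{v_1x: x\in N_{H_2}(v_l)\}.$$ Then $\xi^{ee}(G_1)<\xi^{ee}(G_2)$.
   Context: All graphs are finite, simple and connected. For a vertex $x$ of a connected graph $G$, $\varepsilon_G(x)$ is the eccentricity of $x$ and $d_G(x)$ its degree; $N_H(v)$ is the neighbourhood of $v$ in $H$. The total reciprocal edge-eccentricity of $G$ is $\xi^{ee}(G)=\sum_{uv\in E(G)}\left(\frac{1}{\varepsilon_G(u)}+\frac{1}{\varepsilon_G(v)}\right)=\sum_{x\in V(G)}\frac{d_G(x)}{\varepsilon_G(x)}$. *)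

From mathcomp Require Import all_boot all_order all_algebra.
Set Implicit Arguments. Unset Strict Implicit. Unset Printing Implicit Defensive.
Import Order.TTheory GRing.Theory Num.Theory.

Section GraphParams.
Variable V : finType.
Variable adj : rel V.

Fixpoint reach (n : nat) (x y : V) : bool :=
  match n with
  | 0 => x == y
  | n'.+1 => reach n' x y || [exists z, reach n' x z && adj z y]
  end.

(* graph distance: least n with reach n x y (in a connected graph it is < #|V|) *)
Definition gdist (x y : V) : nat := find (fun n => reach n x y) (iota 0 #|V|).

Definition ecc (x : V) : nat := \max_(y : V) gdist x y.

Definition deg (x : V) : nat := #|[set y | adj x y]|.

Definition xi_ee : rat :=
  \sum_(x : V) ((deg x)%:R / (ecc x)%:R)%R.
End GraphParams.

Definition simple_graph (T : finType) (e : rel T) : Prop :=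
  symmetric e /\ irreflexive e.

Definition connected_graph (T : finType) (e : rel T) : Prop :=
  forall x y, connect e x y.

(* vertices: H1's vertices, H2's vertices, and the l-2 internal path vertices
   v_2, ..., v_{l-1}  (inr i is v_{i+2}) *)
Definition Vtx (T1 T2 : finType) (l : nat) := ((T1 + T2) + 'I_(l - 2))%type.

Section Construction.
Variables (T1 T2 : finType) (e1 : rel T1) (e2 : rel T2) (a : T1) (b : T2) (l : nat).

Definition ppos (v : Vtx T1 T2 l) : option nat :=
  match v with
  | inl (inl x) => if x == a then Some 1 else None
  | inl (inr y) => if y == b then Some l else None
  | inr i => Some (nat_of_ord i).+2
  end.

Definition path_edge (u v : Vtx T1 T2 l) : bool :=
  match ppos u, ppos v with
  | Some i, Some j => (i.+1 == j) || (j.+1 == i)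
  | _, _ => false
  end.

Definition H_edge (u v : Vtx T1 T2 l) : bool :=
  match u, v with
  | inl (inl x), inl (inl y) => e1 x y
  | inl (inr x), inl (inr y) => e2 x y
  | _, _ => false
  end.

Definition G1 : rel (Vtx T1 T2 l) := fun u v => H_edge u v || path_edge u v.

Definition removed_edge (u v : Vtx T1 T2 l) : bool :=
  match u, v with
  | inl (inr x), inl (inr y) => ((x == b) && e2 b y) || ((y == b) && e2 b x)
  | _, _ => false
  end.

Definition added_edge (u v : Vtx T1 T2 l) : bool :=
  match u, v with
  | inl (inl x), inl (inr y) => (x == a) && e2 b y
  | inl (inr y), inl (inl x) => (x == a) && e2 b y
  | _, _ => false
  end.

Definition G2 : rel (Vtx T1 T2 l) :=
  fun u v => (G1 u v && ~~ removed_edge u v) || added_edge u v.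
End Construction.

Arguments G1 {T1 T2} e1 e2 a b l _ _.
Arguments G2 {T1 T2} e1 e2 a b l _ _.

(* In G2 the vertex v_l becomes pendant and its k = d_{H2}(v_l) neighbours in H2 are
   reattached to v_1, so only the degrees of v_1 and v_l change: v_1 gains k, while v_l
   drops to degree 1 < d_{G1}(v_1).  Writing eA, eB for the eccentricities of v_1 in H1
   and of v_l in H2, the path vertex v_j has eccentricity at least
   max(j - 1 + eA, l - j + eB) in G1 and at most max(j - 1 + max(eA, eB), l - j) in G2,
   while the vertices of H1 and of H2 - v_l have no larger eccentricity in G2 than in G1.
   Hence, when eB <= eA, the terms d/e of the vertices other than v_1, v_l compare one by
   one, and when eA < eB they compare after reversing the path.  Moving k units of degree
   from v_l to v_1 increases the sum of the two remaining terms, since e_{G2}(v_1) is at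
   most both e_{G1}(v_1) and e_{G1}(v_l), and strictly below one of them. *)

From mathcomp Require Import all_boot all_order all_algebra.
From mathcomp Require Import zify lra.
Import Order.TTheory GRing.Theory Num.Theory.
Set Implicit Arguments. Unset Strict Implicit. Unset Printing Implicit Defensive.

Section Distance.
Variables (V : finType) (e : rel V).

Lemma reach0 x : reach e 0 x x.
Proof. by rewrite /= eqxx. Qed.

Lemma reachS n x y : reach e n x y -> reach e n.+1 x y.
Proof. by move=> h /=; rewrite h. Qed.

Lemma reach1 x y : e x y -> reach e 1 x y.
Proof. by move=> h /=; apply/orP; right; apply/existsP; exists x; rewrite eqxx. Qed.

Lemma reach_cat n m x y z : reach e n x y -> reach e m y z -> reach e (n + m) x z.
Proof.
elim: m z => [|m IH] z /=; first by rewrite addn0 => h /eqP <-.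
rewrite addnS => h /orP [h'|/existsP [w /andP [h1 h2]]]; first exact/reachS/IH.
by apply/orP; right; apply/existsP; exists w; rewrite h2 andbT; apply: IH h h1.
Qed.

Lemma reach_connect n x y : reach e n x y -> connect e x y.
Proof.
elim: n y => [|n IH] y /=; first by move/eqP => ->.
case/orP => [h|/existsP [w /andP [h1 h2]]]; first exact: IH.
exact: connect_trans (IH _ h1) (connect1 h2).
Qed.

Lemma path_reach x p : path e x p -> reach e (size p) x (last x p).
Proof.
elim: p x => [|z p IH] x /=; first by rewrite eqxx.
by case/andP => exz /IH; apply: reach_cat (reach1 exz).
Qed.

Lemma reach_lipschitz (f : V -> nat) :
  (forall u v, e u v -> f v <= f u + 1) ->
  forall n x y, reach e n x y -> f y <= f x + n.
Proof.
move=> hf; elim=> [|n IH] x y /=; first by move/eqP => ->; rewrite addn0.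
case/orP => [/IH|/existsP [w /andP [/IH h1 /hf h2]]]; lia.
Qed.

Lemma gdist_leq n x y : reach e n x y -> gdist e x y <= n.
Proof.
move=> h; rewrite /gdist; case: (ltnP n #|V|) => hn.
  rewrite leqNgt; apply/negP => /(before_find 0).
  by rewrite nth_iota // add0n h.
by apply: leq_trans (find_size _ _) _; rewrite size_iota.
Qed.

Lemma reach_gdist x y : connect e x y -> reach e (gdist e x y) x y.
Proof.
case/connectP => p /shortenP [p' /path_reach hr uq _ ->].
have sz : size p' < #|V|.
  by have := max_card (mem (x :: p')); rewrite (card_uniqP uq).
have hh : has (fun n => reach e n x (last x p')) (iota 0 #|V|).
  by apply/hasP; exists (size p'); rewrite // mem_iota.
have := nth_find 0 hh; rewrite /gdist nth_iota //.
by move: hh; rewrite has_find size_iota.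
Qed.

Lemma gdist_lipschitz (f : V -> nat) x y :
  (forall u v, e u v -> f v <= f u + 1) -> connect e x y -> f y <= f x + gdist e x y.
Proof. by move=> hf /reach_gdist; apply: reach_lipschitz. Qed.

Lemma gdist_edge w u v : connect e w u -> e u v -> gdist e w v <= gdist e w u + 1.
Proof. by move=> /reach_gdist c /reach1 euv; apply/gdist_leq/(reach_cat c euv). Qed.

Lemma gdistxx x : gdist e x x = 0.
Proof. by apply/eqP; rewrite -leqn0; apply/gdist_leq/reach0. Qed.

Lemma gdist_gt0 x y : x != y -> 0 < gdist e x y.
Proof.
move=> xy; rewrite /gdist.
have : 0 < #|V| by apply/card_gt0P; exists x.
by case: #|V| => // n _ /=; rewrite (negbTE xy).
Qed.

Lemma gdist_le_ecc x y : gdist e x y <= ecc e x.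
Proof. exact: (@leq_bigmax V (gdist e x) y). Qed.

Lemma ecc_gt0 x y : x != y -> 0 < ecc e x.
Proof. by move=> /gdist_gt0 h; apply: leq_trans h (gdist_le_ecc x y). Qed.

Lemma ecc_leq x m : (forall y, exists2 n, n <= m & reach e n x y) -> ecc e x <= m.
Proof.
move=> h; apply/bigmax_leqP => y _; have [n nm /gdist_leq r] := h y.
exact: leq_trans r nm.
Qed.

Lemma ecc_addl_leq x c m : (forall y, c + gdist e x y <= m) -> c + ecc e x <= m.
Proof.
move=> h; suff : ecc e x <= m - c by have := h x; lia.
by apply/bigmax_leqP => y _; have := h y; lia.
Qed.

Lemma neighbour_exists x : connected_graph e -> 1 < #|V| -> exists y, e x y.
Proof.
move=> con /card_gt1P [y [z [_ _ yz]]].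
have [w wx] : exists w, w != x.
  by case: (eqVneq y x) => [yx|]; [exists z; rewrite -yx eq_sym | exists y].
case/connectP: (con x w) => [[|u p]] /=; first by move=> _ wx'; rewrite wx' eqxx in wx.
by case/andP => h _ _; exists u.
Qed.

End Distance.

Lemma reach_hom (V W : finType) (e : rel V) (e' : rel W) (f : V -> W) :
  (forall u v, e u v -> e' (f u) (f v)) ->
  forall n x y, reach e n x y -> reach e' n (f x) (f y).
Proof.
move=> hf; elim=> [|n IH] x y /=; first by move/eqP => ->.
case/orP => [h|/existsP [w /andP [h1 h2]]]; first by rewrite IH.
by apply/orP; right; apply/existsP; exists (f w); rewrite IH // hf.
Qed.

Lemma cardsU_disjoint (T : finType) (A B : {set T}) :
  A :&: B = set0 -> #|A :|: B| = #|A| + #|B|.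
Proof. by move=> AB; have := cardsUI A B; rewrite AB cards0 addn0. Qed.

Section RationalInequalities.
Local Open Scope ring_scope.
Variable R : realFieldType.
Implicit Types d m n : nat.

Lemma ler_natdiv d m n : (0 < m)%N -> (m <= n)%N -> d%:R / n%:R <= d%:R / m%:R :> R.
Proof.
move=> m0 mn; rewrite ler_wpM2l ?ler0n // lef_pV2 ?posrE ?ltr0n ?ler_nat //; lia.
Qed.

Lemma ltr_natdiv d m n : (0 < d)%N -> (0 < m)%N -> (m < n)%N ->
  d%:R / n%:R < d%:R / m%:R :> R.
Proof.
move=> d0 m0 mn; rewrite ltr_pM2l ?ltr0n // ltf_pV2 ?posrE ?ltr0n ?ltr_nat //; lia.
Qed.

Lemma transfer_gain d1 d2 k A1 A2 B1 B2 : (0 < k)%N ->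
  (0 < A2)%N -> (A2 <= A1)%N -> (0 < B2)%N -> (B2 <= B1)%N -> (A2 < B1)%N ->
  d1%:R / A1%:R + (d2 + k)%:R / B1%:R < (d1 + k)%:R / A2%:R + d2%:R / B2%:R :> R.
Proof.
move=> k0 A20 A21 B20 B21 AB.
have h1 := ler_natdiv d1 A20 A21; have h2 := ltr_natdiv k0 A20 AB.
have h3 := ler_natdiv d2 B20 B21.
rewrite !natrD !mulrDl; lra.
Qed.

Lemma transfer_gain_cross d1 d2 k A1 A2 B1 B2 : (d2 < d1)%N ->
  (0 < A2)%N -> (A2 <= B1)%N -> (0 < B2)%N -> (B2 <= A1)%N -> (A2 < A1)%N ->
  d1%:R / A1%:R + (d2 + k)%:R / B1%:R < (d1 + k)%:R / A2%:R + d2%:R / B2%:R :> R.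
Proof.
move=> d21 A20 AB B20 BA A21.
have -> : d1 = ((d1 - d2) + d2)%N by lia.
have /ltr_natdiv /(_ A20 A21) h1 : (0 < d1 - d2)%N by lia.
have h2 := ler_natdiv d2 B20 BA; have h3 := ler_natdiv (d2 + k) A20 AB.
rewrite !natrD !mulrDl in h1 h3 *; lra.
Qed.

End RationalInequalities.

Section OrderedSums.
Local Open Scope ring_scope.
Variable R : numDomainType.

Lemma ltr_sum_reindex (V : finType) (f g : V -> R) (rho : V -> V) (A B : V) :
  injective rho -> rho A = A -> rho B = B -> A != B ->
  (forall v, v != A -> v != B -> f (rho v) <= g v) ->
  f A + f B < g A + g B -> \sum_v f v < \sum_v g v.
Proof.
move=> rho_inj rhoA rhoB AB hv hAB.
have split2 (h : V -> R) :
    \sum_v h v = h A + h B + \sum_(v | (v != A) && (v != B)) h v.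
  by rewrite (bigD1 A) // (bigD1 B) 1?eq_sym //= addrA.
rewrite (reindex_inj rho_inj) /= !split2 rhoA rhoB.
by rewrite ltr_leD // ler_sum // => v /andP [vA vB]; apply: hv.
Qed.

End OrderedSums.

Section Construction.
Variables (T1 T2 : finType) (e1 : rel T1) (e2 : rel T2) (a : T1) (b : T2) (l : nat).
Hypotheses (irr1 : irreflexive e1) (con1 : connected_graph e1) (card1 : 1 < #|T1|).
Hypotheses (sym2 : symmetric e2) (irr2 : irreflexive e2) (con2 : connected_graph e2).
Hypotheses (card2 : 1 < #|T2|) (l_ge2 : 1 < l).

Local Notation V := (Vtx T1 T2 l).
Local Notation g1 := (G1 e1 e2 a b l).
Local Notation g2 := (G2 e1 e2 a b l).
Local Notation ppos := (ppos a b (l := l)).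

Definition inH1 (x : T1) : V := inl (inl x).
Definition inH2 (y : T2) : V := inl (inr y).

(* The path vertex v_j, meaningful for 1 <= j <= l only. *)
Definition pvtx (j : nat) : V :=
  if j <= 1 then inH1 a else if insub (j - 2) is Some i then inr i else inH2 b.

Lemma pvtx1 : pvtx 1 = inH1 a. Proof. by []. Qed.

Lemma pvtxl : pvtx l = inH2 b.
Proof. by rewrite /pvtx ifN ?insubN //; lia. Qed.

Lemma ppos_pvtx j : 1 <= j <= l -> ppos (pvtx j) = Some j.
Proof.
case/andP => j1 jl; rewrite /pvtx; case: ifP => j1'.
  have -> : j = 1 by lia.
  by rewrite /= eqxx.
case: insubP => [i _ vi|h]; first by rewrite /= vi; congr Some; lia.
have -> : j = l by lia.
by rewrite /= eqxx.
Qed.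

Lemma ppos_range v j : ppos v = Some j -> 1 <= j <= l.
Proof.
case: v => [[z|y]|i] /=; try by case: ifP => // _ [<-]; lia.
by move=> [<-]; have := ltn_ord i; lia.
Qed.

Lemma ppos_inv v j : ppos v = Some j -> v = pvtx j.
Proof.
case: v => [[z|y]|i] /=.
- by case: ifP => // /eqP -> [<-].
- by case: ifP => // /eqP -> [<-]; rewrite pvtxl.
- move=> [<-]; rewrite /pvtx /=; have := ltn_ord i.
  case: insubP => [i' _ vi|] hi; last lia.
  by congr inr; apply: val_inj => /=; rewrite vi; lia.
Qed.

Lemma inr_pvtx (i : 'I_(l - 2)) : inr i = pvtx i.+2.
Proof. exact: ppos_inv. Qed.

Lemma eq_pvtx w k : 1 <= k <= l -> (w == pvtx k) = (ppos w == Some k).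
Proof. by move=> hk; apply/eqP/eqP => [->|/ppos_inv //]; apply: ppos_pvtx. Qed.

Variant vtx_spec (w : V) : Prop :=
  | VtxH1 x of w = inH1 x
  | VtxH2 y of y != b & w = inH2 y
  | VtxPath k of 1 <= k <= l & w = pvtx k.

Lemma vtxP w : vtx_spec w.
Proof.
case: w => [[x|y]|i]; first exact: (@VtxH1 _ x).
  case: (eqVneq y b) => [->|yb]; last exact: (@VtxH2 _ y yb).
  have hl : 0 < l <= l by lia.
  exact: VtxPath hl (esym pvtxl).
have hi : 0 < i.+2 <= l by have := ltn_ord i; lia.
exact: VtxPath hi (inr_pvtx i).
Qed.

Lemma removed_edge_pvtx j w : j < l ->
  ~~ removed_edge e2 b (pvtx j) w && ~~ removed_edge e2 b w (pvtx j).
Proof.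
move=> jl; rewrite /pvtx; case: ifP => j1; first by case: w => [[]|].
by case: insubP => [i _ _|]; [case: w => [[]|] | lia].
Qed.

Lemma G1_path_step j : 1 <= j < l -> g1 (pvtx j) (pvtx j.+1) && g1 (pvtx j.+1) (pvtx j).
Proof. by move=> hj; rewrite /G1 /path_edge !ppos_pvtx ?eqxx ?orbT //; lia. Qed.

Lemma G2_path_step j : 1 <= j < l -> g2 (pvtx j) (pvtx j.+1) && g2 (pvtx j.+1) (pvtx j).
Proof.
move=> hj; have /andP [h1 h2] := G1_path_step hj.
have /andP [r1 r2] := @removed_edge_pvtx j (pvtx j.+1) (proj2 (andP hj)).
by rewrite /G2 h1 h2 r1 r2.
Qed.

Lemma pvtx_walk (r : rel V) :
  (forall j, 1 <= j < l -> r (pvtx j) (pvtx j.+1) && r (pvtx j.+1) (pvtx j)) ->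
  forall i j, 1 <= i <= j -> j <= l ->
  reach r (j - i) (pvtx i) (pvtx j) && reach r (j - i) (pvtx j) (pvtx i).
Proof.
move=> hr i; elim=> [|j IH] hij jl; first lia.
case: (eqVneq i j.+1) => [->|ne]; first by rewrite subnn !reach0.
have /andP [r1 r2] : reach r (j - i) (pvtx i) (pvtx j) && reach r (j - i) (pvtx j) (pvtx i).
  by apply: IH; lia.
have /andP [s1 s2] : r (pvtx j) (pvtx j.+1) && r (pvtx j.+1) (pvtx j) by apply: hr; lia.
have -> : j.+1 - i = (j - i) + 1 by lia.
by rewrite (reach_cat r1 (reach1 s1)) addnC (reach_cat (reach1 s2) r2).
Qed.

Lemma G1_path_walk i j : 1 <= i <= j -> j <= l ->
  reach g1 (j - i) (pvtx i) (pvtx j) && reach g1 (j - i) (pvtx j) (pvtx i).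
Proof. exact/pvtx_walk/G1_path_step. Qed.

Lemma G2_path_walk i j : 1 <= i <= j -> j <= l ->
  reach g2 (j - i) (pvtx i) (pvtx j) && reach g2 (j - i) (pvtx j) (pvtx i).
Proof. exact/pvtx_walk/G2_path_step. Qed.

Lemma G1_H1_walk x z : reach g1 (gdist e1 x z) (inH1 x) (inH1 z).
Proof.
by apply: (reach_hom (e := e1)); [move=> u v; rewrite /G1 /= => -> | exact: reach_gdist].
Qed.

Lemma G1_H2_walk y z : reach g1 (gdist e2 y z) (inH2 y) (inH2 z).
Proof.
by apply: (reach_hom (e := e2)); [move=> u v; rewrite /G1 /= => -> | exact: reach_gdist].
Qed.

Lemma G2_H1_walk x z : reach g2 (gdist e1 x z) (inH1 x) (inH1 z).
Proof.
by apply: (reach_hom (e := e1)); [move=> u v; rewrite /G2 /G1 /= => -> | exact: reach_gdist].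
Qed.

Definition contract2 (y : T2) : V := if y == b then inH1 a else inH2 y.

Lemma contract2b : contract2 b = inH1 a.
Proof. by rewrite /contract2 eqxx. Qed.

Lemma contract2N y : y != b -> contract2 y = inH2 y.
Proof. by rewrite /contract2 => /negbTE ->. Qed.

Lemma G2_H2_walk y z : reach g2 (gdist e2 y z) (contract2 y) (contract2 z).
Proof.
apply: (reach_hom (e := e2)); last exact: reach_gdist.
move=> u v euv; rewrite /contract2.
case: (eqVneq u b) => [ub|ub]; case: (eqVneq v b) => [vb|vb].
- by subst; rewrite irr2 in euv.
- by rewrite /G2 /= eqxx -ub euv orbT.
- by rewrite /G2 /= eqxx sym2 -vb euv orbT.
- by rewrite /G2 /G1 /= euv (negbTE ub) (negbTE vb).
Qed.

Lemma G1_connected u v : connect g1 u v.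
Proof.
suff hA w : connect g1 (inH1 a) w && connect g1 w (inH1 a).
  by have /andP [_ ua] := hA u; have /andP [av _] := hA v; apply: connect_trans ua av.
case: (vtxP w) => [x ->|y _ ->|k /andP [k1 kl] ->].
- by rewrite !(reach_connect (G1_H1_walk _ _)).
- have /andP [pl lp] : reach g1 (l - 1) (pvtx 1) (pvtx l) && reach g1 (l - 1) (pvtx l) (pvtx 1).
    by apply: G1_path_walk; lia.
  rewrite pvtx1 pvtxl in pl lp.
  rewrite (connect_trans (reach_connect pl) (reach_connect (G1_H2_walk _ _))).
  by rewrite (connect_trans (reach_connect (G1_H2_walk _ _)) (reach_connect lp)).
- have /andP [h1 h2] : reach g1 (k - 1) (pvtx 1) (pvtx k) && reach g1 (k - 1) (pvtx k) (pvtx 1).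
    by apply: G1_path_walk; lia.
  by rewrite -pvtx1 (reach_connect h1) (reach_connect h2).
Qed.

Local Notation eccA := (ecc e1 a).
Local Notation eccB := (ecc e2 b).

Section Potential.
Variables (f1 : T1 -> nat) (p : nat -> nat) (f2 : T2 -> nat).
Hypotheses (f1a : f1 a = p 1) (f2b : f2 b = p l).
Hypothesis f1_lip : forall u v, e1 u v -> f1 v <= f1 u + 1.
Hypothesis f2_lip : forall u v, e2 u v -> f2 v <= f2 u + 1.
Hypothesis p_lip : forall j, 1 <= j < l -> p j.+1 <= p j + 1 /\ p j <= p j.+1 + 1.

(* A 1-Lipschitz function on G1 glued from ones on H1, on the path and on H2:
   its increments bound eccentricities in G1 from below. *)
Definition pot (v : V) : nat :=
  match v with inl (inl x) => f1 x | inl (inr y) => f2 y | inr i => p i.+2 end.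

Lemma pot_ppos v j : ppos v = Some j -> pot v = p j.
Proof.
case: v => [[x|y]|i] /=; last by move=> [<-].
- by case: ifP => // /eqP -> [<-].
- by case: ifP => // /eqP -> [<-].
Qed.

Lemma pot_lipschitz u v : g1 u v -> pot v <= pot u + 1.
Proof.
case/orP.
  by case: u => [[u|u]|u]; case: v => [[v|v]|v] //=; [exact: f1_lip | exact: f2_lip].
rewrite /path_edge; case hu: (ppos u) => [i|] //; case hv: (ppos v) => [j|] //.
have /andP [i1 il] := ppos_range hu; have /andP [j1 jl] := ppos_range hv.
rewrite (pot_ppos hu) (pot_ppos hv) => /orP [] /eqP ij.
  by subst j; have [] := p_lip (_ : 1 <= i < l); lia.
by subst i; have [] := p_lip (_ : 1 <= j < l); lia.
Qed.

Lemma pot_le_ecc u v : pot v <= pot u + ecc g1 u.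
Proof.
apply: leq_trans (gdist_lipschitz pot_lipschitz (G1_connected u v)) _.
by rewrite leq_add2l gdist_le_ecc.
Qed.

End Potential.

Lemma gdist1_lipschitz x u v : e1 u v -> gdist e1 x v <= gdist e1 x u + 1.
Proof. exact: gdist_edge (con1 x u). Qed.

Lemma gdist2_lipschitz y u v : e2 u v -> gdist e2 y v <= gdist e2 y u + 1.
Proof. exact: gdist_edge (con2 y u). Qed.

Lemma ecc_G1_inH1 x :
  (forall z, gdist e1 x z <= ecc g1 (inH1 x)) /\
  (forall y, gdist e1 x a + (l - 1) + gdist e2 b y <= ecc g1 (inH1 x)).
Proof.
pose p j := gdist e1 x a + (j - 1).
pose f2 y := gdist e1 x a + (l - 1) + gdist e2 b y.
have f1a : gdist e1 x a = p 1 by rewrite /p subnn addn0.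
have f2b : f2 b = p l by rewrite /f2 /p gdistxx addn0.
have f2_lip u v : e2 u v -> f2 v <= f2 u + 1 by move/(gdist2_lipschitz b); rewrite /f2; lia.
have p_lip j : 1 <= j < l -> p j.+1 <= p j + 1 /\ p j <= p j.+1 + 1 by rewrite /p; lia.
have h := pot_le_ecc f1a f2b (@gdist1_lipschitz x) f2_lip p_lip (inH1 x).
by split => [z|y]; [have := h (inH1 z) | have := h (inH2 y)]; rewrite /= gdistxx.
Qed.

Lemma ecc_G1_inH2 y :
  (forall z, gdist e2 y z <= ecc g1 (inH2 y)) /\
  (forall x, gdist e2 y b + (l - 1) + gdist e1 a x <= ecc g1 (inH2 y)).
Proof.
pose p j := gdist e2 y b + (l - j).
pose f1 x := gdist e2 y b + (l - 1) + gdist e1 a x.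
have f1a : f1 a = p 1 by rewrite /f1 /p gdistxx addn0.
have f2b : gdist e2 y b = p l by rewrite /p subnn addn0.
have f1_lip u v : e1 u v -> f1 v <= f1 u + 1 by move/(gdist1_lipschitz a); rewrite /f1; lia.
have p_lip j : 1 <= j < l -> p j.+1 <= p j + 1 /\ p j <= p j.+1 + 1 by rewrite /p; lia.
have h := pot_le_ecc f1a f2b f1_lip (@gdist2_lipschitz y) p_lip (inH2 y).
by split => [z|x]; [have := h (inH2 z) | have := h (inH1 x)]; rewrite /= gdistxx.
Qed.

Lemma ecc_G1_pvtx j : 1 <= j <= l ->
  (j - 1) + eccA <= ecc g1 (pvtx j) /\ (l - j) + eccB <= ecc g1 (pvtx j).
Proof.
move=> hj; split; apply: ecc_addl_leq => z.
- pose p k := l - k; pose f1 x := (l - 1) + gdist e1 a x; pose f2 (y : T2) := 0.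
  have f1a : f1 a = p 1 by rewrite /f1 /p gdistxx addn0.
  have f2b : f2 b = p l by rewrite /f2 /p subnn.
  have f1_lip u v : e1 u v -> f1 v <= f1 u + 1 by move/(gdist1_lipschitz a); rewrite /f1; lia.
  have p_lip k : 1 <= k < l -> p k.+1 <= p k + 1 /\ p k <= p k.+1 + 1 by rewrite /p; lia.
  have := pot_le_ecc f1a f2b f1_lip (fun _ _ _ => leq0n _) p_lip (pvtx j) (inH1 z).
  by rewrite (pot_ppos f1a f2b (ppos_pvtx hj)) /= /f1 /p; lia.
- pose p k := k - 1; pose f1 (x : T1) := 0; pose f2 y := (l - 1) + gdist e2 b y.
  have f1a : f1 a = p 1 by rewrite /f1 /p subnn.
  have f2b : f2 b = p l by rewrite /f2 /p gdistxx addn0.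
  have f2_lip u v : e2 u v -> f2 v <= f2 u + 1 by move/(gdist2_lipschitz b); rewrite /f2; lia.
  have p_lip k : 1 <= k < l -> p k.+1 <= p k + 1 /\ p k <= p k.+1 + 1 by rewrite /p; lia.
  have := pot_le_ecc f1a f2b (fun _ _ _ => leq0n _) f2_lip p_lip (pvtx j) (inH2 z).
  by rewrite (pot_ppos f1a f2b (ppos_pvtx hj)) /= /f2 /p; lia.
Qed.

Lemma G2_v1_walk k : 1 <= k <= l ->
  reach g2 (k - 1) (inH1 a) (pvtx k) && reach g2 (k - 1) (pvtx k) (inH1 a).
Proof. by move=> hk; rewrite -pvtx1; apply: G2_path_walk; lia. Qed.

Lemma G2_H2_walk_to_v1 y : reach g2 (gdist e2 y b) (contract2 y) (inH1 a).
Proof. by rewrite -contract2b; apply: G2_H2_walk. Qed.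

Lemma G2_H2_walk_from_v1 y : y != b -> reach g2 (gdist e2 b y) (inH1 a) (inH2 y).
Proof. by move=> yb; rewrite -contract2b -(contract2N yb); apply: G2_H2_walk. Qed.

Lemma ecc_G2_inH1 x : ecc g2 (inH1 x) <= ecc g1 (inH1 x).
Proof.
have [h1 h2] := ecc_G1_inH1 x.
apply: ecc_leq => w; case: (vtxP w) => [z ->|y yb ->|k hk ->].
- by exists (gdist e1 x z); [apply: h1 | apply: G2_H1_walk].
- exists (gdist e1 x a + gdist e2 b y); first by have := h2 y; lia.
  exact: reach_cat (G2_H1_walk x a) (G2_H2_walk_from_v1 yb).
- exists (gdist e1 x a + (k - 1)); first by have := h2 b; rewrite gdistxx; lia.
  by apply: reach_cat (G2_H1_walk x a) _; case/andP: (G2_v1_walk hk).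
Qed.

Lemma ecc_G2_inH2 y : y != b -> ecc g2 (inH2 y) <= ecc g1 (inH2 y).
Proof.
move=> yb; have [h1 h2] := ecc_G1_inH2 y.
have walk_v1 := G2_H2_walk_to_v1 y; rewrite contract2N // in walk_v1.
apply: ecc_leq => w; case: (vtxP w) => [x ->|z zb ->|k hk ->].
- exists (gdist e2 y b + gdist e1 a x); first by have := h2 x; lia.
  exact: reach_cat walk_v1 (G2_H1_walk a x).
- exists (gdist e2 y z); first exact: h1.
  by rewrite -(contract2N yb) -(contract2N zb); apply: G2_H2_walk.
- exists (gdist e2 y b + (k - 1)); first by have := h2 a; rewrite gdistxx; lia.
  by apply: reach_cat walk_v1 _; case/andP: (G2_v1_walk hk).
Qed.

Lemma ecc_G2_pvtx j : 1 <= j <= l ->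
  ecc g2 (pvtx j) <= maxn ((j - 1) + maxn eccA eccB) (l - j).
Proof.
move=> hj; have /andP [_ to_v1] := G2_v1_walk hj.
apply: ecc_leq => w; case: (vtxP w) => [x ->|y yb ->|k hk ->].
- exists ((j - 1) + gdist e1 a x); first by have := gdist_le_ecc e1 a x; lia.
  exact: reach_cat to_v1 (G2_H1_walk a x).
- exists ((j - 1) + gdist e2 b y); first by have := gdist_le_ecc e2 b y; lia.
  exact: reach_cat to_v1 (G2_H2_walk_from_v1 yb).
- case: (leqP k j) => kj.
    exists (j - k); first lia.
    by have /andP [] : reach g2 (j - k) (pvtx k) (pvtx j) && reach g2 (j - k) (pvtx j) (pvtx k)
      by apply: G2_path_walk; lia.
  exists (k - j); first lia.
  by have /andP [] : reach g2 (k - j) (pvtx j) (pvtx k) && reach g2 (k - j) (pvtx k) (pvtx j)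
    by apply: G2_path_walk; lia.
Qed.

Lemma deg_G2_inH1 x : x != a -> deg g2 (inH1 x) = deg g1 (inH1 x).
Proof.
move=> xa; apply: eq_card => w; rewrite !inE.
by case: w => [[z|y]|i]; rewrite /G2 /= ?(negbTE xa) ?andbT ?orbF.
Qed.

Lemma deg_G2_inner i : deg g2 (inr i) = deg g1 (inr i).
Proof. by apply: eq_card => w; rewrite !inE /G2 /= andbT orbF. Qed.

Lemma deg_G1_inner i : deg g1 (inr i) = 2.
Proof.
rewrite /deg; have hi := ltn_ord i.
have -> : [set w | g1 (inr i) w] = [set pvtx i.+1; pvtx i.+3].
  apply/setP => w; rewrite !inE !eq_pvtx; try lia.
  rewrite /G1 /path_edge /=; case: (ppos w) => [j|] //=.
  by rewrite !(inj_eq (@Some_inj _)) eqSS orbC eq_sym [j == _]eq_sym.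
rewrite cards2; case: eqP => // /(congr1 ppos).
by rewrite !ppos_pvtx; [move=> [] | lia | lia]; lia.
Qed.

(* Exchanging v_1 and v_l maps the G1-neighbours of an H2-vertex y != v_l
   onto its G2-neighbours. *)
Definition swap_ends (w : V) : V :=
  if w == inH1 a then inH2 b else if w == inH2 b then inH1 a else w.

Lemma swap_endsK : involutive swap_ends.
Proof.
move=> w; rewrite /swap_ends.
case: (eqVneq w (inH1 a)) => [->|wa]; first by rewrite eqxx.
by case: (eqVneq w (inH2 b)) => [->|wb]; rewrite ?eqxx // (negbTE wa) (negbTE wb).
Qed.

Lemma deg_G2_inH2 y : y != b -> deg g2 (inH2 y) = deg g1 (inH2 y).
Proof.
move=> yb; rewrite /deg -(card_preimset _ (inv_inj swap_endsK)).
apply: eq_card => w; rewrite !inE /swap_ends.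
case: w => [[z|z]|i].
- have -> : (inl (inl z) == inH1 a :> V) = (z == a) by [].
  have -> : (inl (inl z) == inH2 b :> V) = false by [].
  case: (eqVneq z a) => [->|za]; rewrite /G2 /G1 /path_edge /= ?eqxx /=.
    by rewrite (negbTE yb) sym2 !orbF andbN.
  by rewrite (negbTE za) !orbF ?andbT.
- have -> : (inl (inr z) == inH1 a :> V) = false by [].
  have -> : (inl (inr z) == inH2 b :> V) = (z == b) by [].
  case: (eqVneq z b) => [->|zb]; rewrite /G2 /G1 /path_edge /= ?eqxx /=.
    by rewrite (negbTE yb) sym2 !orbF.
  by rewrite (negbTE zb) (negbTE yb) !orbF andbT.
- have -> : (inr i == inH1 a :> V) = false by [].
  have -> : (inr i == inH2 b :> V) = false by [].
  by rewrite /G2 /= andbT orbF.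
Qed.

Definition nbr_vl : {set V} := inH2 @: [set y | e2 b y].

Lemma mem_nbr_vl w : (w \in nbr_vl) = (if w is inl (inr y) then e2 b y else false).
Proof.
apply/imsetP/idP => [[y + ->]|]; first by rewrite inE.
by case: w => [[//|y]|//] hy; exists y; rewrite ?inE.
Qed.

Lemma card_nbr_vl : #|nbr_vl| = deg e2 b.
Proof. by rewrite card_imset // => y z []. Qed.

Lemma deg_G2_v1 : deg g2 (inH1 a) = deg g1 (inH1 a) + deg e2 b.
Proof.
rewrite -card_nbr_vl /deg -cardsU_disjoint.
  apply: eq_card => w; rewrite !inE mem_nbr_vl.
  by case: w => [[z|y]|i]; rewrite /G2 /= ?eqxx ?andbT ?orbF.
apply/setP => w; rewrite !inE mem_nbr_vl.
case: w => [[z|y]|i] /=; rewrite ?andbF //.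
case: (eqVneq y b) => [->|yb]; first by rewrite irr2 andbF.
by rewrite /G1 /path_edge /= eqxx (negbTE yb).
Qed.

Lemma deg_G1_vl : deg g1 (inH2 b) = deg g2 (inH2 b) + deg e2 b.
Proof.
rewrite -card_nbr_vl /deg -cardsU_disjoint.
  apply: eq_card => w; rewrite !inE mem_nbr_vl.
  case: w => [[z|y]|i]; rewrite /G2 /= ?irr2 ?andbF ?andbT ?orbF //.
  by rewrite eqxx /G1 /=; case: (e2 b y); rewrite ?orbT ?andbT ?orbF.
apply/setP => w; rewrite !inE mem_nbr_vl.
case: w => [[z|y]|i] /=; rewrite ?andbF //.
by rewrite /G2 /= eqxx /=; case: (e2 b y); rewrite ?andbF ?orbF ?andbT.
Qed.

Lemma deg_G2_vl : deg g2 (inH2 b) <= 1.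
Proof.
rewrite /deg -[X in _ <= X](cards1 (pvtx l.-1)); apply/subset_leq_card/subsetP => w.
rewrite !inE => hw.
have : path_edge a b (inH2 b) w.
  move: hw; case: w => [[z|y]|i]; rewrite /G2 /G1 /= ?irr2 ?andbF ?orbF ?andbT //.
  by rewrite eqxx /=; case: (e2 b y); rewrite ?andbF ?andbT.
rewrite /path_edge /= eqxx; case hpw: (ppos w) => [j|] //.
have := ppos_range hpw; rewrite eq_pvtx ?hpw; last lia.
by rewrite (inj_eq (@Some_inj _)) => hj /orP [] /eqP; lia.
Qed.

Lemma deg_G1_v1 : 1 < deg g1 (inH1 a).
Proof.
have [z az] := neighbour_exists a con1 card1.
have za : z != a by apply: contraTneq az => ->; rewrite irr1.
apply: (@leq_trans #|[set inH1 z; pvtx 2]|).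
  rewrite cards2; case: eqP => // /(congr1 ppos).
  by rewrite ppos_pvtx /= ?(negbTE za) //; lia.
apply/subset_leq_card/subsetP => w; rewrite !inE => /orP [] /eqP ->.
  by rewrite /G1 /= az.
by rewrite -pvtx1 /G1 /path_edge !ppos_pvtx //=; lia.
Qed.

Lemma eccA_gt0 : 0 < eccA.
Proof.
have [z az] := neighbour_exists a con1 card1.
by apply: (@ecc_gt0 _ _ _ z); apply: contraTneq az => <-; rewrite irr1.
Qed.

Lemma eccB_gt0 : 0 < eccB.
Proof.
have [z bz] := neighbour_exists b con2 card2.
by apply: (@ecc_gt0 _ _ _ z); apply: contraTneq bz => <-; rewrite irr2.
Qed.

Lemma deg_H2_vl_gt0 : 0 < deg e2 b.
Proof. by have [z bz] := neighbour_exists b con2 card2; apply/card_gt0P; exists z; rewrite inE. Qed.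

Lemma ecc_G2_gt0 v : 0 < ecc g2 v.
Proof.
case: (eqVneq v (inH1 a)) => [->|va]; last exact: ecc_gt0 va.
by apply: (@ecc_gt0 _ _ _ (inH2 b)).
Qed.

Lemma ecc_G1_v1 : eccA <= ecc g1 (inH1 a) /\ (l - 1) + eccB <= ecc g1 (inH1 a).
Proof. by have := @ecc_G1_pvtx 1; rewrite pvtx1 subnn; apply; lia. Qed.

Lemma ecc_G1_vl : (l - 1) + eccA <= ecc g1 (inH2 b) /\ eccB <= ecc g1 (inH2 b).
Proof. by have := @ecc_G1_pvtx l; rewrite pvtxl subnn; apply; lia. Qed.

Lemma ecc_G2_v1 : ecc g2 (inH1 a) <= maxn (maxn eccA eccB) (l - 1).
Proof. by have := @ecc_G2_pvtx 1; rewrite pvtx1 subnn; apply; lia. Qed.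

Lemma ecc_G2_vl : ecc g2 (inH2 b) <= (l - 1) + maxn eccA eccB.
Proof. by have := @ecc_G2_pvtx l; rewrite pvtxl subnn maxn0; apply; lia. Qed.

Definition flip_path (v : V) : V := if v is inr i then inr (rev_ord i) else v.

Lemma flip_pathK : involutive flip_path.
Proof. by case=> [|i] //=; rewrite rev_ordK. Qed.

Lemma deg_G2_off_ends v : v != inH1 a -> v != inH2 b -> deg g2 v = deg g1 v.
Proof.
case: v => [[x|y]|i] va vb; last exact: deg_G2_inner.
  by apply: deg_G2_inH1; apply: contraNneq va => ->.
by apply: deg_G2_inH2; apply: contraNneq vb => ->.
Qed.

Lemma deg_G1_flip v : deg g1 (flip_path v) = deg g1 v.
Proof. by case: v => [|i] //=; rewrite !deg_G1_inner. Qed.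

Lemma ecc_G2_off_ends v : v != inH1 a -> v != inH2 b -> eccB <= eccA -> ecc g2 v <= ecc g1 v.
Proof.
case: v => [[x|y]|i] va vb hAB.
- exact: ecc_G2_inH1.
- by apply: ecc_G2_inH2; apply: contraNneq vb => ->.
- have hj : 1 <= i.+2 <= l by have := ltn_ord i; lia.
  rewrite inr_pvtx; have := ecc_G2_pvtx hj; have := ecc_G1_pvtx hj; lia.
Qed.

Lemma ecc_G2_off_ends_flip v : v != inH1 a -> v != inH2 b -> eccA < eccB ->
  ecc g2 v <= ecc g1 (flip_path v).
Proof.
case: v => [[x|y]|i] va vb hAB /=.
- exact: ecc_G2_inH1.
- by apply: ecc_G2_inH2; apply: contraNneq vb => ->.
- have hi := ltn_ord i.
  have hj : 1 <= i.+2 <= l by lia.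
  have hj' : 1 <= (rev_ord i).+2 <= l by rewrite /=; lia.
  rewrite !inr_pvtx; have := ecc_G2_pvtx hj; have := ecc_G1_pvtx hj'; rewrite /=; lia.
Qed.

Local Notation term g v := ((deg g v)%:R / (ecc g v)%:R : rat)%R.

Lemma term_le u v : deg g2 v = deg g1 u -> ecc g2 v <= ecc g1 u -> (term g1 u <= term g2 v)%R.
Proof. by move=> ->; apply: ler_natdiv (ecc_G2_gt0 v). Qed.

Lemma xi_ee_G1_lt_G2 : (xi_ee g1 < xi_ee g2)%R.
Proof.
have [A1a A1b] := ecc_G1_v1; have [B1a B1b] := ecc_G1_vl.
have A2 := ecc_G2_v1; have B2 := ecc_G2_vl; have A21 := ecc_G2_inH1 a.
have := eccA_gt0; have := eccB_gt0; have := ecc_G2_gt0 (inH1 a); have := ecc_G2_gt0 (inH2 b).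
have := deg_H2_vl_gt0; have := deg_G2_vl; have := deg_G1_v1.
rewrite /xi_ee; case: (leqP eccB eccA) => hAB *.
- apply: (ltr_sum_reindex (f := fun v => term g1 v) (g := fun v => term g2 v) (rho := id)
    (A := inH1 a) (B := inH2 b)) => //.
    by move=> v va vb; apply: term_le; [exact: deg_G2_off_ends | exact: ecc_G2_off_ends].
  by rewrite /= deg_G2_v1 deg_G1_vl; apply: transfer_gain; lia.
- apply: (ltr_sum_reindex (f := fun v => term g1 v) (g := fun v => term g2 v)
    (rho := flip_path) (A := inH1 a) (B := inH2 b)) => //.
  + exact: inv_inj flip_pathK.
  + move=> v va vb; apply: term_le; last exact: ecc_G2_off_ends_flip.
    by rewrite deg_G1_flip; exact: deg_G2_off_ends.
  + by rewrite /= deg_G2_v1 deg_G1_vl; apply: transfer_gain_cross; lia.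
Qed.

End Construction.

Theorem theorem3p3 (T1 T2 : finType) (e1 : rel T1) (e2 : rel T2)
    (a : T1) (b : T2) (l : nat) :
  simple_graph e1 -> connected_graph e1 -> 2 <= #|T1| ->
  simple_graph e2 -> connected_graph e2 -> 2 <= #|T2| ->
  2 <= l ->
  (xi_ee (G1 e1 e2 a b l) < xi_ee (G2 e1 e2 a b l))%R.
Proof.
move=> [_ irr1] con1 card1 [sym2 irr2] con2 card2 l_ge2.
exact: xi_ee_G1_lt_G2.
Qed.
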